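(* Let $\mathcal A$ be a well-structured abstract domain with functions $(\alpha,\gamma)$, and let monotone abstract operators $\llbracket e\rrbracket^\#:\mathcal A\to\mathcal A$ be given for each basic command $e$. Consider the induced Hoare-type proof system described in the context. (1) If $\llbracket e\rrbracket^\#$ is a sound abstraction of $\llbracket e\rrbracket$ for each basic command $e$, then the proof system is sound: $\vdash\{a\}S\{b\}$ implies $\models\{a\}S\{b\}$. (2) If $\llbracket e\rrbracket^\#$ is a complete abstraction of $\llbracket e\rrbracket$ for each basic command $e$, then the proof system is sound and relatively complete: $\vdash\{a\}S\{b\}$ iff $\models\{a\}S\{b\}$, for all $a,b\in\mathcal A$ and programs $S$.
   Context: Fix a finite set $V$ of quantum variables, each a qubit with state space $\mathcal H_q\cong\mathbb C^2$; for $W\subseteq V$, $\mathcal H_W=\bigotimes_{q\in W}\mathcal H_q$. Operators and subspaces on $\mathcal H_W$ are identified with their cylindrical extensions to $\mathcal H_V$, and a subspace is identified with its orthogonal projector; $P^\perp$ is the orthocomplement. $\mathcal D(\mathcal H_V)$ is the set of partial density operators (positive, trace $\le1$). Programs: $S::=\mathbf{skip}\mid \bar q:=|0\rangle\mid \bar q\mathrel{*{=}}U\mid \mathbf{assert}\ P[\bar q]\mid S_0;S_1\mid \mathbf{if}\ P[\bar q]\ \mathbf{then}\ S_1\ \mathbf{else}\ S_0\ \mathbf{end}\mid\mathbf{while}\ P[\bar q]\ \mathbf{do}\ S\ \mathbf{end}$, with $\bar q=q_1,\dots,q_t$ distinct variables, $U$ unitary on $\mathcal H_{\bar q}$, $P$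 a subspace of $\mathcal H_{\bar q}$; the first four forms are the basic commands. Semantics $\llbracket S\rrbracket:\mathcal D(\mathcal H_V)\to\mathcal D(\mathcal H_V)$: $\llbracket\mathbf{skip}\rrbracket(\rho)=\rho$; $\llbracket\bar q:=|0\rangle\rrbracket(\rho)=\sum_{i=0}^{2^t-1}|0\rangle_{\bar q}\langle i|\rho|i\rangle_{\bar q}\langle0|$; $\llbracket\bar q\mathrel{*{=}}U\rrbracket(\rho)=U\rho U^\dagger$; $\llbracket\mathbf{assert}\ P[\bar q]\rrbracket(\rho)=P\rho P$; $\llbracket S_0;S_1\rrbracket=\llbracket S_1\rrbracket\circ\llbracket S_0\rrbracket$; $\llbracket\mathbf{if}\ P[\bar q]\ \mathbf{then}\ S_1\ \mathbf{else}\ S_0\ \mathbf{end}\rrbracket(\rho)=\llbracket\mathbf{assert}\ P[\bar q];S_1\rrbracket(\rho)+\llbracket\mathbf{assert}\ P^\perp[\bar q];S_0\rrbracket(\rho)$; $\llbracket\mathbf{while}\ P[\bar q]\ \mathbf{do}\ S\ \mathbf{end}\rrbracket(\rho)=\sum_{i\ge0}\llbracket(\mathbf{assert}\ P[\bar q];S)^i;\mathbf{assert}\ P^\perp[\bar q]\rrbracket(\rho)$, where $T^i$ is $i$-fold sequential composition ($T^0=\mathbf{skip}$). The concrete domain is $\mathcal Q=2^{\mathcal D(\mathcal H_V)}$ ordered by inclusion, and $\llbracket S\rrbracket(R)=\{\llbracket S\rrbracket(\rho):\rho\in R\}$. A pair of monotone maps $(\alpha,\gamma)$ between posets is a Galois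 connection if $c\le\gamma(a)\iff\alpha(c)\le a$, and a Galois embedding if moreover $\alpha\circ\gamma=\mathrm{id}$. A complete lattice $(\mathcal A,\le_{\mathcal A},\vee,\wedge,\bot,\top)$ with monotone $\alpha:\mathcal Q\to\mathcal A$, $\gamma:\mathcal A\to\mathcal Q$ is a well-structured abstract domain if (a) $(\alpha,\gamma)$ is a Galois embedding, and (b) for any family $\rho_i\in\mathcal D(\mathcal H_V)$ and reals $x_i>0$ with $\sum_i x_i\rho_i\in\mathcal D(\mathcal H_V)$, $\alpha(\sum_i x_i\rho_i)=\bigvee_i\alpha(\rho_i)$, where $\alpha(\rho)=\alpha(\{\rho\})$. For $f:\mathcal Q\to\mathcal Q$, $f^\#:\mathcal A\to\mathcal A$ is a sound abstraction if $\alpha\circ f\le_{\mathcal A}f^\#\circ\alpha$ pointwise, a complete abstraction if $\alpha\circ f=f^\#\circ\alpha$. Induced Hoare system: assertions are elements of $\mathcal A$; a triple $\{a\}S\{b\}$ is valid, $\models\{a\}S\{b\}$, iff $\llbracket S\rrbracket(\gamma(a))\subseteq\gamma(b)$. Derivability $\vdash\{a\}S\{b\}$ is w.r.t. the rules: (Exp) $\{a\}e\{\llbracket e\rrbracket^\#(a)\}$ for every basic command $e$; (Seq) from $\{a\}S_0\{a'\}$ and $\{a'\}S_1\{b\}$ infer $\{a\}S_0;S_1\{b\}$; (Imp) from $a\le_{\mathcal A}a'$, $\{a'\}S\{b'\}$, $b'\le_{\mathcal A}b$ infer $\{a\}S\{b\}$; (Meas) from $\{a\}\mathbf{assert}\ P[\bar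 q];S_1\{b_1\}$ and $\{a\}\mathbf{assert}\ P^\perp[\bar q];S_0\{b_0\}$ infer $\{a\}\mathbf{if}\ P[\bar q]\ \mathbf{then}\ S_1\ \mathbf{else}\ S_0\ \mathbf{end}\{b_0\vee b_1\}$; (While) from $\{a\}\mathbf{assert}\ P[\bar q];S\{a\}$ and $\{a\}\mathbf{assert}\ P^\perp[\bar q]\{b\}$ infer $\{a\}\mathbf{while}\ P[\bar q]\ \mathbf{do}\ S\ \mathbf{end}\{b\}$. *)

From HB Require Import structures.
From mathcomp Require Import all_boot all_order all_algebra.
From mathcomp Require Import all_classical all_reals all_analysis.
From mathcomp.real_closed Require Import complex.

Set Implicit Arguments.
Unset Strict Implicit.
Unset Printing Implicit Defensive.

Import Order.TTheory GRing.Theory Num.Theory.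
Import numFieldNormedType.Exports.
Local Open Scope classical_set_scope.
Local Open Scope ring_scope.

Section QuantumDefs.
Variable R : realType.
Local Notation C := (R[i]).

(* Computational basis of n qubits: bit strings 'I_n -> bool.
   dim n = #|{ffun 'I_n -> bool}| = 2^n. Basis vectors are indexed through
   enum_val / enum_rank. *)
Notation dim n := #|{ffun 'I_n -> bool}|.

Definition adj m p (A : 'M[C]_(m, p)) : 'M[C]_(p, m) := (map_mx (@conjc R) A)^T.

Definition pdo d (rho : 'M[C]_d) : Prop :=
  (forall v : 'cV[C]_d, 0 <= (adj v *m rho *m v) 0 0) /\ \tr rho <= 1.

Definition unitary d (U : 'M[C]_d) : Prop := adj U *m U = 1%:M.

(* subspaces are represented by their orthogonal projectors *)
Definition projector d (P : 'M[C]_d) : Prop := adj P = P /\ P *m P = P.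

Definition loc n t (qs : t.-tuple 'I_n) (x : 'I_(dim n)) : 'I_(dim t) :=
  enum_rank [ffun j : 'I_t => (enum_val x : {ffun 'I_n -> bool}) (tnth qs j)].

(* cylindrical extension  A (on H_qs)  |->  A (x) I (on H_V) *)
Definition cyl n t (qs : t.-tuple 'I_n) (A : 'M[C]_(dim t)) : 'M[C]_(dim n) :=
  \matrix_(x, y)
    if [forall k : 'I_n, (k \notin qs) ==>
          ((enum_val x : {ffun 'I_n -> bool}) k == (enum_val y : {ffun 'I_n -> bool}) k)]
    then A (loc qs x) (loc qs y) else 0.

Definition zero_idx t : 'I_(dim t) := enum_rank [ffun _ : 'I_t => false].

Inductive basic (n : nat) : Type :=
| BSkip
| BInit (t : nat) (qs : t.-tuple 'I_n)
| BUnit (t : nat) (qs : t.-tuple 'I_n) (U : 'M[C]_(dim t))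
| BAssert (t : nat) (qs : t.-tuple 'I_n) (P : 'M[C]_(dim t)).

Inductive prog (n : nat) : Type :=
| PBasic (e : basic n)
| PSeq (S0 S1 : prog n)
| PIf (t : nat) (qs : t.-tuple 'I_n) (P : 'M[C]_(dim t)) (S1 S0 : prog n)
| PWhile (t : nat) (qs : t.-tuple 'I_n) (P : 'M[C]_(dim t)) (S : prog n).

Definition wf_basic n (e : basic n) : Prop :=
  match e with
  | BSkip => True
  | BInit t qs => uniq qs
  | BUnit t qs U => uniq qs /\ unitary U
  | BAssert t qs P => uniq qs /\ projector P
  end.

Fixpoint wf_prog n (S : prog n) : Prop :=
  match S with
  | PBasic e => wf_basic e
  | PSeq S0 S1 => wf_prog S0 /\ wf_prog S1
  | PIf t qs P S1 S0 => uniq qs /\ projector P /\ wf_prog S1 /\ wf_prog S0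
  | PWhile t qs P Sb => uniq qs /\ projector P /\ wf_prog Sb
  end.

Definition pcompl d (P : 'M[C]_d) : 'M[C]_d := 1%:M - P.

Definition mlim d (f : nat -> 'M[C]_d) : 'M[C]_d :=
  \matrix_(i, j) (limn (fun k => complex.Re (f k i j)) +i* limn (fun k => complex.Im (f k i j)))%C.

Definition mcvg d (f : nat -> 'M[C]_d) (M : 'M[C]_d) : Prop :=
  forall i j, (fun k => complex.Re (f k i j)) @ \oo --> complex.Re (M i j) /\
              (fun k => complex.Im (f k i j)) @ \oo --> complex.Im (M i j).

Definition assert_sem n t (qs : t.-tuple 'I_n) (P : 'M[C]_(dim t)) (rho : 'M[C]_(dim n)) :=
  cyl qs P *m rho *m cyl qs P.

Definition basic_sem n (e : basic n) (rho : 'M[C]_(dim n)) : 'M[C]_(dim n) :=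
  match e with
  | BSkip => rho
  | BInit t qs =>
      \sum_(i < dim t)
        (cyl qs (delta_mx (zero_idx t) i) *m rho *m adj (cyl qs (delta_mx (zero_idx t) i)))
  | BUnit t qs U => cyl qs U *m rho *m adj (cyl qs U)
  | BAssert t qs P => assert_sem qs P rho
  end.

Fixpoint sem n (S : prog n) (rho : 'M[C]_(dim n)) : 'M[C]_(dim n) :=
  match S with
  | PBasic e => basic_sem e rho
  | PSeq S0 S1 => sem S1 (sem S0 rho)
  | PIf t qs P S1 S0 =>
      sem S1 (assert_sem qs P rho) + sem S0 (assert_sem qs (pcompl P) rho)
  | PWhile t qs P Sb =>
      mlim (fun k => \sum_(i < k)
              assert_sem qs (pcompl P) (iter i (fun r => sem Sb (assert_sem qs P r)) rho))
  end.

Definition PDO n := {rho : 'M[C]_(dim n) | pdo rho}.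

Definition csem n (S : prog n) (X : set (PDO n)) : set (PDO n) :=
  [set r | exists2 s, X s & sem S (proj1_sig s) = proj1_sig r].

End QuantumDefs.

Notation dim n := #|{ffun 'I_n -> bool}|.

Record CLattice := {
  car :> Type;
  cle : car -> car -> Prop;
  cle_refl : forall a, cle a a;
  cle_trans : forall a b c, cle a b -> cle b c -> cle a c;
  cle_anti : forall a b, cle a b -> cle b a -> a = b;
  csup : set car -> car;
  csup_ub : forall (X : set car) a, X a -> cle a (csup X);
  csup_least : forall (X : set car) b, (forall a, X a -> cle a b) -> cle (csup X) b
}.

Definition join2 (L : CLattice) (a b : L) : L := csup [set x | x = a \/ x = b].

Section Abstract.
Variables (R : realType) (n : nat) (L : CLattice).
Local Notation Q := (set (@PDO R n)).

Definition galois_embedding (alpha : Q -> L) (gamma : L -> Q) : Prop :=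
  (forall X Y, X `<=` Y -> cle (alpha X) (alpha Y)) /\
  (forall a b, cle a b -> gamma a `<=` gamma b) /\
  (forall X a, X `<=` gamma a <-> cle (alpha X) a) /\
  (forall a, alpha (gamma a) = a).

Definition well_structured (alpha : Q -> L) (gamma : L -> Q) : Prop :=
  galois_embedding alpha gamma /\
  (forall (I : finType) (rs : I -> PDO R n) (x : I -> R) (r : PDO R n),
      (forall i, 0 < x i) ->
      \sum_(i : I) (x i)%:C%C *: proj1_sig (rs i) = proj1_sig r ->
      alpha [set r] = csup [set alpha [set rs i] | i in setT]) /\
  (forall (rs : nat -> PDO R n) (x : nat -> R) (r : PDO R n),
      (forall i, 0 < x i) ->
      mcvg (fun k => \sum_(i < k) (x i)%:C%C *: proj1_sig (rs i)) (proj1_sig r) ->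
      alpha [set r] = csup [set alpha [set rs i] | i in setT]).

Definition sound_abs (alpha : Q -> L) (f : Q -> Q) (fs : L -> L) : Prop :=
  forall X, cle (alpha (f X)) (fs (alpha X)).

Definition complete_abs (alpha : Q -> L) (f : Q -> Q) (fs : L -> L) : Prop :=
  forall X, alpha (f X) = fs (alpha X).

Definition hvalid (gamma : L -> Q) (a : L) (S : prog R n) (b : L) : Prop :=
  csem S (gamma a) `<=` gamma b.

Definition assertP t (qs : t.-tuple 'I_n) (P : 'M[R[i]]_(dim t)) : prog R n :=
  PBasic (BAssert qs P).

Inductive hderiv (abs : basic R n -> L -> L) : L -> prog R n -> L -> Prop :=
| DExp e a : hderiv abs a (PBasic e) (abs e a)
| DSeq a a' b S0 S1 :
    hderiv abs a S0 a' -> hderiv abs a' S1 b -> hderiv abs a (PSeq S0 S1) b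
| DImp a a' b' b S :
    cle a a' -> hderiv abs a' S b' -> cle b' b -> hderiv abs a S b
| DMeas a t (qs : t.-tuple 'I_n) P S1 S0 b1 b0 :
    hderiv abs a (PSeq (assertP qs P) S1) b1 ->
    hderiv abs a (PSeq (assertP qs (pcompl P)) S0) b0 ->
    hderiv abs a (PIf qs P S1 S0) (join2 b0 b1)
| DWhile a b t (qs : t.-tuple 'I_n) P S :
    hderiv abs a (PSeq (assertP qs P) S) a ->
    hderiv abs a (assertP qs (pcompl P)) b ->
    hderiv abs a (PWhile qs P S) b.

End Abstract.

(* Validity of {a} S {b} means alpha (csem S (gamma a)) <= b. Condition (b) of a
   well-structured domain computes this abstraction compositionally: for a
   conditional it is the join over the two branches, and for a loop the supremum
   over its unrollings (assert P; S)^k; assert P^perp, whose outputs sum to the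
   output of the loop (a series of positive semidefinite matrices with bounded
   trace converges, by polarization and monotone convergence of the quadratic
   forms). For completeness,
   completeness of the basic operators propagates to alpha (csem S X) =
   post S (alpha X) with post S a := alpha (csem S (gamma a)), and
   {a} S {post S a} is derivable; a loop uses as invariant the abstraction of
   all states reachable from gamma a by iterating its body. *)

From HB Require Import structures.
From mathcomp Require Import all_boot all_order all_algebra.
From mathcomp Require Import all_classical all_reals all_analysis.
From mathcomp.real_closed Require Import complex.
From mathcomp Require Import ring.

Set Implicit Arguments.
Unset Strict Implicit.
Unset Printing Implicit Defensive.

Import Order.TTheory GRing.Theory Num.Theory.
Import numFieldNormedType.Exports.
Local Open Scope classical_set_scope.
Local Open Scope ring_scope.

Local Notation dim n := #|{ffun 'I_n -> bool}|.

Section Adjoint.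
Variable R : realType.
Local Notation C := R[i].

Lemma adjK d1 d2 (A : 'M[C]_(d1, d2)) : adj (adj A) = A.
Proof. by apply/matrixP => i j; rewrite !mxE conjcK. Qed.

Lemma adjM d1 d2 d3 (A : 'M[C]_(d1, d2)) (B : 'M[C]_(d2, d3)) :
  adj (A *m B) = adj B *m adj A.
Proof.
apply/matrixP => i j; rewrite !mxE rmorph_sum; apply: eq_bigr => k _.
by rewrite !mxE rmorphM mulrC.
Qed.

Lemma adjD d1 d2 (A B : 'M[C]_(d1, d2)) : adj (A + B) = adj A + adj B.
Proof. by apply/matrixP => i j; rewrite !mxE rmorphD. Qed.

Lemma adjB d1 d2 (A B : 'M[C]_(d1, d2)) : adj (A - B) = adj A - adj B.
Proof. by apply/matrixP => i j; rewrite !mxE rmorphB. Qed.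

Lemma adjZ d1 d2 (c : C) (A : 'M[C]_(d1, d2)) : adj (c *: A) = conjc c *: adj A.
Proof. by apply/matrixP => i j; rewrite !mxE rmorphM. Qed.

Lemma adj1 d : adj (1%:M : 'M[C]_d) = 1%:M.
Proof. by apply/matrixP => i j; rewrite !mxE conjc_nat eq_sym. Qed.

Lemma adj_delta d1 d2 (i : 'I_d1) (j : 'I_d2) :
  adj (delta_mx i j : 'M[C]_(d1, d2)) = delta_mx j i.
Proof. by apply/matrixP => a b; rewrite !mxE conjc_nat andbC. Qed.

End Adjoint.

Section PositiveSemidefinite.
Variable R : realType.
Local Notation C := R[i].

Definition qform d (M : 'M[C]_d) (u w : 'cV[C]_d) : C := (adj u *m M *m w) 0 0.

Definition psd d (M : 'M[C]_d) := forall v : 'cV[C]_d, 0 <= qform M v v.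

Lemma qform_delta d (M : 'M[C]_d) i j : qform M (delta_mx i 0) (delta_mx j 0) = M i j.
Proof. by rewrite /qform adj_delta -rowE -colE !mxE. Qed.

Lemma qformDl d (M : 'M[C]_d) u1 u2 w : qform M (u1 + u2) w = qform M u1 w + qform M u2 w.
Proof. by rewrite /qform adjD !mulmxDl mxE. Qed.

Lemma qformDr d (M : 'M[C]_d) u w1 w2 : qform M u (w1 + w2) = qform M u w1 + qform M u w2.
Proof. by rewrite /qform mulmxDr mxE. Qed.

Lemma qformZl d (M : 'M[C]_d) c u w : qform M (c *: u) w = conjc c * qform M u w.
Proof. by rewrite /qform adjZ -!scalemxAl mxE. Qed.

Lemma qformZr d (M : 'M[C]_d) c u w : qform M u (c *: w) = c * qform M u w.
Proof. by rewrite /qform -!scalemxAr mxE. Qed.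

Lemma qform0 d (u w : 'cV[C]_d) : qform 0 u w = 0.
Proof. by rewrite /qform mulmx0 mul0mx mxE. Qed.

Lemma qformMD d (M N : 'M[C]_d) u w : qform (M + N) u w = qform M u w + qform N u w.
Proof. by rewrite /qform mulmxDr mulmxDl mxE. Qed.

Lemma psd0 d : psd (0 : 'M[C]_d).
Proof. by move=> v; rewrite qform0. Qed.

Lemma psdD d (M N : 'M[C]_d) : psd M -> psd N -> psd (M + N).
Proof. by move=> HM HN v; rewrite qformMD addr_ge0. Qed.

Lemma psd_sum d I (r : seq I) (P : pred I) (F : I -> 'M[C]_d) :
  (forall i, P i -> psd (F i)) -> psd (\sum_(i <- r | P i) F i).
Proof.
move=> HF; elim/big_rec: _ => [|i M Pi HM]; first exact: psd0.
exact: psdD (HF _ Pi) HM.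
Qed.

Lemma psd_conj d1 d2 (K : 'M[C]_(d1, d2)) (M : 'M[C]_d2) : psd M -> psd (K *m M *m adj K).
Proof. by move=> HM v; have := HM (adj K *m v); rewrite /qform adjM adjK !mulmxA. Qed.

Lemma psd_diag d (M : 'M[C]_d) i : psd M -> 0 <= M i i.
Proof. by rewrite -qform_delta. Qed.

Lemma psd_tr d (M : 'M[C]_d) : psd M -> 0 <= \tr M.
Proof. by move=> HM; apply: sumr_ge0 => i _; exact: psd_diag. Qed.

Lemma psd_diag_le_tr d (M : 'M[C]_d) i : psd M -> M i i <= \tr M.
Proof.
move=> HM; rewrite /mxtrace (bigD1 i) //= lerDl.
by apply: sumr_ge0 => k _; exact: psd_diag.
Qed.

Definition vc d (i j : 'I_d) (c : C) : 'cV[C]_d := delta_mx i 0 + c *: delta_mx j 0.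

Lemma qform_vc d (M : 'M[C]_d) i j c : qform M (vc i j c) (vc i j c) =
  M i i + c * M i j + conjc c * M j i + conjc c * c * M j j.
Proof. by rewrite /vc qformDl !qformDr !qformZl !qformZr !qform_delta; ring. Qed.

(* Adding the [-c] form cancels the off-diagonal terms. *)
Lemma qform_vc_le_tr d (M : 'M[C]_d) i j c : psd M -> conjc c * c = 1 ->
  qform M (vc i j c) (vc i j c) <= 4 * \tr M.
Proof.
move=> HM Hc.
have Esum : qform M (vc i j c) (vc i j c) + qform M (vc i j (- c)) (vc i j (- c)) =
    2 * (M i i + M j j).
  by rewrite !qform_vc rmorphN mulrNN Hc; ring.
apply: le_trans (_ : _ <= 2 * (M i i + M j j)) _.
  by rewrite -Esum lerDl.
rewrite (_ : 4 = 2 * 2); last by rewrite -natrM.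
rewrite -mulrA ler_wpM2l ?ler0n // mulr2n mulrDl mul1r.
by rewrite lerD ?psd_diag_le_tr.
Qed.

Lemma conjc_i : conjc 'i%C = - 'i%C :> C.
Proof. by apply/eqP; rewrite eq_complex /= ?oppr0 ?eqxx. Qed.

Lemma conjcN1 : conjc (-1 : C) = -1.
Proof. by apply/eqP; rewrite eq_complex /= ?oppr0 ?eqxx. Qed.

Lemma conjcNi : conjc (- 'i%C : C) = 'i%C.
Proof. by apply/eqP; rewrite eq_complex /= ?opprK ?oppr0 ?eqxx. Qed.

Lemma polarization d (M : 'M[C]_d) i j :
  M i j = 4^-1 * ((qform M (vc i j 1) (vc i j 1) - qform M (vc i j (-1)) (vc i j (-1)))
     - 'i%C * (qform M (vc i j 'i%C) (vc i j 'i%C) - qform M (vc i j (-'i%C)) (vc i j (-'i%C)))).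
Proof.
rewrite !qform_vc conjc1 conjcN1 conjcNi conjc_i.
have i2 : 'i%C * 'i%C = -1 :> C by rewrite -expr2 sqr_i.
set rhs := (X in _ = 4^-1 * X).
have E4 : M i j *+ 4 = rhs.
  (* [ring] ignores ['i * 'i = -1]; subtract a vanishing multiple of ['i * 'i + 1]. *)
  have E (z : C) : z = z - ('i%C * 'i%C + 1) * ((M i j - M j i) *+ 2).
    by rewrite i2 addNr mul0r subr0.
  by rewrite /rhs [LHS]E; ring.
by rewrite -E4 -[M i j *+ 4]mulr_natl mulKf ?pnatr_eq0.
Qed.

End PositiveSemidefinite.

Section Cylinder.
Variable R : realType.
Local Notation C := R[i].
Variables (n t : nat) (qs : t.-tuple 'I_n).

Let ev (x : 'I_(dim n)) : {ffun 'I_n -> bool} := enum_val x.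
Let agree (x y : 'I_(dim n)) : bool :=
  [forall k : 'I_n, (k \notin qs) ==> (ev x k == ev y k)].

Lemma cylE (A : 'M[C]_(dim t)) x y :
  cyl qs A x y = if agree x y then A (loc qs x) (loc qs y) else 0.
Proof. by rewrite mxE. Qed.

Lemma agreeP x y : reflect (forall k, k \notin qs -> ev x k = ev y k) (agree x y).
Proof.
apply: (iffP forallP) => H k.
  by move=> kq; have /implyP/(_ kq)/eqP := H k.
by apply/implyP=> kq; rewrite H.
Qed.

Lemma agree_refl x : agree x x.
Proof. by apply/agreeP. Qed.

Lemma agree_sym x y : agree x y = agree y x.
Proof. by apply/agreeP/agreeP=> H k kq; rewrite H. Qed.

Lemma agree_trans x y z : agree x y -> agree y z -> agree x z.
Proof. by move=> /agreeP H1 /agreeP H2; apply/agreeP=> k kq; rewrite H1 ?H2. Qed.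

Lemma loc_ev x : (enum_val (loc qs x) : {ffun 'I_t -> bool}) = [ffun j => ev x (tnth qs j)].
Proof. by rewrite /loc enum_rankK. Qed.

Lemma agree_loc_inj x y : agree x y -> loc qs x = loc qs y -> x = y.
Proof.
move=> /agreeP Hag Hl; apply: enum_val_inj; apply/ffunP=> k.
case: (boolP (k \in qs)) => [/tnthP [j ->]|kq]; last exact: Hag.
have := congr1 (fun z => (enum_val z : {ffun 'I_t -> bool}) j) Hl.
by rewrite /= !loc_ev !ffunE.
Qed.

Lemma cyl1 : cyl qs (1%:M : 'M[C]_(dim t)) = 1%:M.
Proof.
apply/matrixP=> x y; rewrite cylE !mxE.
case: (eqVneq x y) => [->|nxy]; first by rewrite agree_refl eqxx.
case Hag: (agree x y) => //.
case: (eqVneq (loc qs x) (loc qs y)) => [Hl|] //.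
by rewrite (agree_loc_inj Hag Hl) eqxx in nxy.
Qed.

Lemma cylD (A B : 'M[C]_(dim t)) : cyl qs (A + B) = cyl qs A + cyl qs B.
Proof. by apply/matrixP=> x y; rewrite !mxE; case: ifP; rewrite ?addr0 // !mxE. Qed.

Lemma cylB (A B : 'M[C]_(dim t)) : cyl qs (A - B) = cyl qs A - cyl qs B.
Proof. by apply/matrixP=> x y; rewrite !mxE; case: ifP; rewrite ?subr0 // !mxE. Qed.

Lemma cyl0 : cyl qs (0 : 'M[C]_(dim t)) = 0.
Proof. by apply/matrixP=> x y; rewrite !mxE; case: ifP. Qed.

Lemma cyl_sum I (r : seq I) (P : pred I) (F : I -> 'M[C]_(dim t)) :
  cyl qs (\sum_(i <- r | P i) F i) = \sum_(i <- r | P i) cyl qs (F i).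
Proof.
elim/big_rec2: _ => [|i x y _ H]; first exact: cyl0.
by rewrite cylD H.
Qed.

Lemma cyl_adj (A : 'M[C]_(dim t)) : adj (cyl qs A) = cyl qs (adj A).
Proof.
apply/matrixP=> x y.
have -> : (adj (cyl qs A)) x y = conjc (cyl qs A y x) by rewrite /adj mxE mxE.
rewrite !cylE agree_sym; case: ifP => _; rewrite ?conjc0 //.
by rewrite /adj mxE mxE.
Qed.

Hypothesis Uq : uniq qs.

Let splice (x : 'I_(dim n)) (k : 'I_(dim t)) : 'I_(dim n) :=
  enum_rank [ffun i : 'I_n => if i \in qs then
     [exists j, (tnth qs j == i) && (enum_val k : {ffun 'I_t -> bool}) j] else ev x i].

Lemma ev_splice x k : ev (splice x k) = [ffun i : 'I_n => if i \in qs then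
     [exists j, (tnth qs j == i) && (enum_val k : {ffun 'I_t -> bool}) j] else ev x i].
Proof. by rewrite /ev /splice enum_rankK. Qed.

Lemma splice_agree x k : agree x (splice x k).
Proof. by apply/agreeP=> i iq; rewrite ev_splice ffunE (negbTE iq). Qed.

Lemma exists_tnth (f : {ffun 'I_t -> bool}) j :
  [exists j', (tnth qs j' == tnth qs j) && f j'] = f j.
Proof.
apply/existsP/idP => [[j' /andP [/eqP Hj Hf]]|H].
  by move/tuple_uniqP: Uq => /(_ _ _ Hj) <-.
by exists j; rewrite eqxx.
Qed.

Lemma splice_loc x k : loc qs (splice x k) = k.
Proof.
apply: enum_val_inj; rewrite loc_ev; apply/ffunP=> j.
by rewrite !ffunE ev_splice ffunE mem_tnth exists_tnth.
Qed.

Lemma splice_inv x z : agree x z -> splice x (loc qs z) = z.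
Proof.
move=> /agreeP Hag; apply: enum_val_inj; rewrite -[enum_val _]/(ev _) ev_splice.
apply/ffunP=> k; rewrite ffunE.
case: (boolP (k \in qs)) => [/tnthP [j ->]|kq]; last exact: Hag.
by rewrite loc_ev exists_tnth ffunE.
Qed.

(* The middle index of the product ranges, among those agreeing with [x] off [qs],
   over a copy of the local indices. *)
Lemma cylM (A B : 'M[C]_(dim t)) : cyl qs (A *m B) = cyl qs A *m cyl qs B.
Proof.
apply/matrixP=> x y; rewrite cylE !mxE.
case Hxy: (agree x y).
  rewrite (bigID (fun z => agree x z)) /= [X in _ + X]big1 ?addr0; last first.
    by move=> z /negbTE Hz; rewrite !cylE Hz mul0r.
  rewrite (eq_bigr (fun z => A (loc qs x) (loc qs z) * B (loc qs z) (loc qs y))); last first.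
    move=> z Hz; rewrite !cylE Hz.
    by rewrite (agree_trans (_ : agree z x) Hxy) // agree_sym.
  rewrite (reindex_onto (splice x) (loc qs)) /=; last by move=> z; exact: splice_inv.
  apply: eq_big => [k|k _]; first by rewrite splice_agree splice_loc eqxx.
  by rewrite splice_loc.
rewrite big1 // => z _; rewrite !cylE.
case Hxz: (agree x z); last by rewrite mul0r.
case Hzy: (agree z y); last by rewrite mulr0.
by rewrite (agree_trans Hxz Hzy) in Hxy.
Qed.

End Cylinder.

Section ComplexLimits.
Variable R : realType.
Local Notation C := R[i].
Local Notation Re := (@complex.Re R).
Local Notation Im := (@complex.Im R).

Definition ccvg (u : nat -> C) (z : C) : Prop :=
  (fun k => Re (u k)) @ \oo --> Re z /\ (fun k => Im (u k)) @ \oo --> Im z.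

Lemma ReM (x y : C) : Re (x * y) = Re x * Re y - Im x * Im y.
Proof. by case: x => a b; case: y. Qed.

Lemma ImM (x y : C) : Im (x * y) = Re x * Im y + Im x * Re y.
Proof. by case: x => a b; case: y => c d /=; rewrite addrC. Qed.

Lemma ccvg_cst z : ccvg (fun=> z) z.
Proof. by split; exact: cvg_cst. Qed.

Lemma ccvgD u v a b : ccvg u a -> ccvg v b -> ccvg (fun k => u k + v k) (a + b).
Proof.
case=> [ua1 ua2] [vb1 vb2]; split; rewrite raddfD.
  by under eq_fun do rewrite raddfD; exact: cvgD.
by under eq_fun do rewrite raddfD; exact: cvgD.
Qed.

Lemma ccvgB u v a b : ccvg u a -> ccvg v b -> ccvg (fun k => u k - v k) (a - b).
Proof.
case=> [ua1 ua2] [vb1 vb2]; split; rewrite raddfB.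
  by under eq_fun do rewrite raddfB; exact: cvgB.
by under eq_fun do rewrite raddfB; exact: cvgB.
Qed.

Lemma ccvgMl c u a : ccvg u a -> ccvg (fun k => c * u k) (c * a).
Proof.
case=> [ua1 ua2]; split; rewrite ?ReM ?ImM.
  under eq_fun do rewrite ReM.
  by apply: cvgB; apply: cvgM => //; exact: cvg_cst.
under eq_fun do rewrite ImM.
by apply: cvgD; apply: cvgM => //; exact: cvg_cst.
Qed.

Lemma ccvg_sum I (r : seq I) (F : I -> nat -> C) (l : I -> C) :
  (forall i, ccvg (F i) (l i)) ->
  ccvg (fun k => \sum_(i <- r) F i k) (\sum_(i <- r) l i).
Proof.
move=> HF; elim: r => [|i r IH].
  by rewrite big_nil; under eq_fun do rewrite big_nil; exact: ccvg_cst.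
by rewrite big_cons; under eq_fun do rewrite big_cons; exact: ccvgD.
Qed.

Lemma cvg_const_seq (u : nat -> R) l c : u @ \oo --> l -> (forall k, u k = c) -> l = c.
Proof. by move=> + uc; rewrite (funext uc) => cl; exact: (cvg_unique _ cl (cvg_cst c)). Qed.

Lemma ccvg_ge u z a : ccvg u z -> (forall k, a <= u k) -> a <= z.
Proof.
case=> [uz1 uz2] au; rewrite lecE; apply/andP; split.
  by rewrite (cvg_const_seq uz2 (c := Im a)) // => k; have := au k; rewrite lecE => /andP[/eqP].
apply: (ler_cvg_to (cvg_cst _) uz1); apply: nearW => k.
by have := au k; rewrite lecE => /andP[].
Qed.

Lemma ccvg_le u z b : ccvg u z -> (forall k, u k <= b) -> z <= b.
Proof.
case=> [uz1 uz2] ub; rewrite lecE; apply/andP; split.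
  by rewrite (cvg_const_seq uz2 (c := Im b)) // => k; have := ub k; rewrite lecE => /andP[/eqP].
apply: (ler_cvg_to uz1 (cvg_cst _)); apply: nearW => k.
by have := ub k; rewrite lecE => /andP[].
Qed.

Lemma ccvg_lim u z : ccvg u z -> (limn (fun k => Re (u k)) +i* limn (fun k => Im (u k)))%C = z.
Proof. by case: z => a b [ua ub]; rewrite (cvg_lim _ ua) ?(cvg_lim _ ub). Qed.

(* A nondecreasing sequence in [C] has constant imaginary part, so only the real part moves. *)
Lemma ccvg_nondecreasing u b : (forall k, u k <= u k.+1) -> (forall k, u k <= b) ->
  exists z, ccvg u z.
Proof.
move=> uS ub.
have Im_u k : Im (u k) = Im (u 0%N).
  by elim: k => // k <-; have := uS k; rewrite lecE => /andP[/eqP].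
exists ((sup (range (fun k => Re (u k)))) +i* Im (u 0%N))%C; split.
  apply: nondecreasing_cvgn.
    by apply/nondecreasing_seqP => k; have := uS k; rewrite lecE => /andP[].
  by exists (Re b) => _ [k _ <-]; have := ub k; rewrite lecE => /andP[].
by rewrite (funext Im_u); exact: cvg_cst.
Qed.

End ComplexLimits.

Section MatrixLimits.
Variable R : realType.
Local Notation C := R[i].

Lemma qform_expand d (M : 'M[C]_d) u w :
  qform M u w = \sum_b \sum_a (adj u 0 a * w b 0) * M a b.
Proof.
rewrite /qform mxE; apply: eq_bigr => b _; rewrite mxE mulr_suml.
by apply: eq_bigr => a _; ring.
Qed.

Lemma mcvg_qform d (S : nat -> 'M[C]_d) M u w :
  mcvg S M -> ccvg (fun k => qform (S k) u w) (qform M u w).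
Proof.
move=> SM; rewrite qform_expand; under eq_fun do rewrite qform_expand.
by apply: ccvg_sum => b; apply: ccvg_sum => a; exact: ccvgMl (SM a b).
Qed.

Lemma mcvg_tr d (S : nat -> 'M[C]_d) M : mcvg S M -> ccvg (fun k => \tr (S k)) (\tr M).
Proof. by move=> SM; apply: ccvg_sum => i; exact: SM. Qed.

Lemma psd_mcvg d (S : nat -> 'M[C]_d) M : mcvg S M -> (forall k, psd (S k)) -> psd M.
Proof. by move=> SM psdS v; apply: ccvg_ge (mcvg_qform v v SM) _ => k; exact: psdS. Qed.

Lemma mcvg_tr_le d (S : nat -> 'M[C]_d) M b :
  mcvg S M -> (forall k, \tr (S k) <= b) -> \tr M <= b.
Proof. by move=> SM; apply: ccvg_le (mcvg_tr SM). Qed.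

Lemma mcvg_mlim d (S : nat -> 'M[C]_d) :
  (forall i j, exists z, ccvg (fun k => S k i j) z) -> mcvg S (mlim S).
Proof. by move=> HS i j; have [z Sz] := HS i j; rewrite mxE (ccvg_lim Sz). Qed.

(* Entries are recovered from four quadratic forms by polarization, and each
   of these is nondecreasing and bounded by the trace. *)
Lemma psd_series_mcvg d (f : nat -> 'M[C]_d) b :
  (forall i, psd (f i)) -> (forall k, \tr (\sum_(i < k) f i) <= b) ->
  mcvg (fun k => \sum_(i < k) f i) (mlim (fun k => \sum_(i < k) f i)).
Proof.
move=> psd_f trb; set S := fun k => _.
have psd_S k : psd (S k) by apply: psd_sum.
have form_cvg c i j : conjc c * c = 1 ->
    exists z, ccvg (fun k => qform (S k) (vc i j c) (vc i j c)) z.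
  move=> Hc; apply: (@ccvg_nondecreasing _ _ (4 * b)) => k.
    by rewrite /S big_ord_recr /= qformMD lerDl psd_f.
  apply: le_trans (qform_vc_le_tr _ _ (psd_S k) Hc) _.
  by apply: ler_wpM2l; [rewrite ler0n | exact: trb].
apply: mcvg_mlim => i j.
have u1 : conjc 1 * 1 = 1 :> C by rewrite conjc1 mulr1.
have uN1 : conjc (-1) * -1 = 1 :> C by rewrite conjcN1 mulrNN mulr1.
have ui : conjc 'i%C * 'i%C = 1 :> C by rewrite conjc_i mulNr -expr2 sqr_i opprK.
have uNi : conjc (- 'i%C) * - 'i%C = 1 :> C by rewrite conjcNi mulrN -expr2 sqr_i opprK.
have [[z1 cvg1] [z2 cvg2]] := (form_cvg _ i j u1, form_cvg _ i j uN1).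
have [[z3 cvg3] [z4 cvg4]] := (form_cvg _ i j ui, form_cvg _ i j uNi).
exists (4^-1 * ((z1 - z2) - 'i%C * (z3 - z4))).
rewrite (funext (fun k => polarization (S k) i j)).
by apply: ccvgMl; apply: ccvgB; [exact: ccvgB | apply: ccvgMl; exact: ccvgB].
Qed.

End MatrixLimits.

Section Semantics.
Variable R : realType.
Local Notation C := R[i].

Lemma projector_compl d (P : 'M[C]_d) : projector P -> projector (pcompl P).
Proof.
case=> P_herm P_idem; split; rewrite /pcompl; first by rewrite adjB adj1 P_herm.
by rewrite mulmxBl mul1mx mulmxBr mulmx1 P_idem subrr subr0.
Qed.

Definition trace_nonincreasing d (F : 'M[C]_d -> 'M[C]_d) :=
  forall rho, psd rho -> psd (F rho) /\ \tr (F rho) <= \tr rho.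

Variables (n t : nat) (qs : t.-tuple 'I_n).

Lemma tr_assert_sem_split (P : 'M[C]_(dim t)) rho : uniq qs -> projector P ->
  \tr (assert_sem qs P rho) + \tr (assert_sem qs (pcompl P) rho) = \tr rho.
Proof.
move=> Uq HP; have tr_assert (Q : 'M[C]_(dim t)) : projector Q ->
    \tr (assert_sem qs Q rho) = \tr (cyl qs Q *m rho).
  by case=> _ Q_idem; rewrite /assert_sem mxtrace_mulC mulmxA -cylM // Q_idem.
rewrite !tr_assert //; last exact: projector_compl.
rewrite /pcompl cylB cyl1 mulmxBl mul1mx.
by rewrite raddfB /= addrC subrK.
Qed.

Lemma psd_assert_sem (P : 'M[C]_(dim t)) rho : projector P -> psd rho ->
  psd (assert_sem qs P rho).
Proof.
case=> P_herm _ psd_rho; rewrite /assert_sem {2}(_ : cyl qs P = adj (cyl qs P)).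
  exact: psd_conj.
by rewrite cyl_adj P_herm.
Qed.

Lemma assert_sem_trace_nonincreasing (P : 'M[C]_(dim t)) : uniq qs -> projector P ->
  trace_nonincreasing (assert_sem qs P).
Proof.
move=> Uq HP rho psd_rho; split; first exact: psd_assert_sem.
rewrite -[X in _ <= X](tr_assert_sem_split rho Uq HP) lerDl.
by apply/psd_tr/psd_assert_sem => //; exact: projector_compl.
Qed.

Lemma tr_unitary_conj (U : 'M[C]_(dim t)) rho : uniq qs -> unitary U ->
  \tr (cyl qs U *m rho *m adj (cyl qs U)) = \tr rho.
Proof.
by move=> Uq HU; rewrite mxtrace_mulC mulmxA cyl_adj -cylM // HU cyl1 mul1mx.
Qed.

Lemma tr_init_sem (rho : 'M[C]_(dim n)) : uniq qs ->
  \tr (\sum_(i < dim t) (cyl qs (delta_mx (zero_idx t) i) *m rho *m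
        adj (cyl qs (delta_mx (zero_idx t) i)))) = \tr rho.
Proof.
move=> Uq; rewrite raddf_sum /=.
under eq_bigr do rewrite mxtrace_mulC mulmxA.
rewrite -raddf_sum /= -mulmx_suml.
under eq_bigr do rewrite cyl_adj adj_delta -cylM // mul_delta_mx.
by rewrite -cyl_sum -mx1_sum_delta cyl1 mul1mx.
Qed.

Fixpoint unroll (P : 'M[C]_(dim t)) (Sb : prog R n) (k : nat) : prog R n :=
  if k is k'.+1 then PSeq (PSeq (assertP qs P) Sb) (unroll P Sb k')
  else assertP qs (pcompl P).

Lemma sem_unroll P Sb k rho : sem (unroll P Sb k) rho =
  assert_sem qs (pcompl P) (iter k (fun r => sem Sb (assert_sem qs P r)) rho).
Proof. by elim: k rho => [|k IH] rho //=; rewrite IH -iterSr. Qed.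

Section While.
Variables (P : 'M[C]_(dim t)) (Sb : prog R n).
Hypotheses (Uq : uniq qs) (HP : projector P) (Sb_tni : trace_nonincreasing (sem Sb)).

Let body r := sem Sb (assert_sem qs P r).

Lemma psd_iter_body k rho : psd rho -> psd (iter k body rho).
Proof. by move=> psd_rho; elim: k => //= k IH; exact: (Sb_tni (psd_assert_sem HP IH)).1. Qed.

Lemma psd_sem_unroll k rho : psd rho -> psd (sem (unroll P Sb k) rho).
Proof.
move=> psd_rho; rewrite sem_unroll; apply: psd_assert_sem; first exact: projector_compl.
exact: psd_iter_body.
Qed.

(* What has left the loop plus what is still in it never exceeds the input trace. *)
Lemma tr_unroll_sum_le k rho : psd rho ->
  \tr (\sum_(i < k) sem (unroll P Sb i) rho) <= \tr rho.
Proof.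
move=> psd_rho.
have inv m : \tr (\sum_(i < m) sem (unroll P Sb i) rho) + \tr (iter m body rho) <= \tr rho.
  elim: m => [|m IH]; first by rewrite big_ord0 raddf0 add0r.
  rewrite big_ord_recr /= raddfD /= -addrA; apply: le_trans IH; rewrite lerD2l sem_unroll.
  rewrite -[X in _ <= X](tr_assert_sem_split (iter m body rho) Uq HP) addrC lerD2r.
  exact: (Sb_tni (psd_assert_sem HP (psd_iter_body m psd_rho))).2.
apply: le_trans (inv k); rewrite lerDl; exact/psd_tr/psd_iter_body.
Qed.

Lemma sem_while_mcvg rho : psd rho ->
  mcvg (fun k => \sum_(i < k) sem (unroll P Sb i) rho) (sem (PWhile qs P Sb) rho).
Proof.
move=> psd_rho.
have -> : sem (PWhile qs P Sb) rho = mlim (fun k => \sum_(i < k) sem (unroll P Sb i) rho).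
  by congr mlim; apply: funext => k; apply: eq_bigr => i _; rewrite sem_unroll.
apply: (@psd_series_mcvg _ _ (fun i => sem (unroll P Sb i) rho) (\tr rho)) => [i | k].
  exact: psd_sem_unroll.
exact: tr_unroll_sum_le.
Qed.

Lemma while_trace_nonincreasing : trace_nonincreasing (sem (PWhile qs P Sb)).
Proof.
move=> rho psd_rho; have cvg_rho := sem_while_mcvg psd_rho; split.
  apply: psd_mcvg cvg_rho _ => k; apply: psd_sum => i _; exact: psd_sem_unroll.
apply: mcvg_tr_le cvg_rho _ => k; exact: tr_unroll_sum_le.
Qed.

End While.

End Semantics.

Lemma sem_trace_nonincreasing (R : realType) n (S : prog R n) :
  wf_prog S -> trace_nonincreasing (sem S).
Proof.
elim: S => [e|S0 IH0 S1 IH1|t qs P S1 IH1 S0 IH0|t qs P Sb IHb].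
- case: e => [|t qs|t qs U|t qs P] /= wf_e rho psd_rho.
  + by split; rewrite ?lexx.
  + split; first by apply: psd_sum => i _; exact: psd_conj.
    by rewrite tr_init_sem.
  + case: wf_e => Uq HU; split; first exact: psd_conj.
    by rewrite tr_unitary_conj.
  + by case: wf_e => Uq HP; exact: assert_sem_trace_nonincreasing.
- case=> /IH0 S0_tni /IH1 S1_tni rho psd_rho /=.
  have [psd0 tr0] := S0_tni _ psd_rho; have [psd1 tr1] := S1_tni _ psd0.
  by split; last exact: le_trans tr1 tr0.
- case=> Uq [HP [/IH1 S1_tni /IH0 S0_tni]] rho psd_rho /=.
  have [psdT trT] := S1_tni _ (psd_assert_sem qs HP psd_rho).
  have [psdF trF] := S0_tni _ (psd_assert_sem qs (projector_compl HP) psd_rho).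
  split; first exact: psdD.
  by rewrite raddfD /= -(tr_assert_sem_split rho Uq HP) lerD.
- by case=> Uq [HP /IHb Sb_tni]; exact: while_trace_nonincreasing.
Qed.

Section LiftedSemantics.
Variables (R : realType) (n : nat).

Lemma pdo_sem (S : prog R n) (rho : PDO R n) :
  wf_prog S -> pdo (sem S (proj1_sig rho)).
Proof.
case: rho => rho [psd_rho tr_rho] wf_S /=.
have [psd_S tr_S] := sem_trace_nonincreasing wf_S psd_rho.
by split; [exact: psd_S | exact: le_trans tr_S tr_rho].
Qed.

Definition semP (S : prog R n) (wf_S : wf_prog S) (rho : PDO R n) :
  PDO R n := exist _ (sem S (proj1_sig rho)) (pdo_sem rho wf_S).

Lemma PDO_inj (r s : PDO R n) : proj1_sig r = proj1_sig s -> r = s.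
Proof. by case: r s => r Hr [s Hs] /= rs; subst s; rewrite (Prop_irrelevance Hr Hs). Qed.

Lemma wf_unroll t (qs : t.-tuple 'I_n) (P : 'M[R[i]]_(dim t)) (Sb : prog R n) k :
  uniq qs -> projector P -> wf_prog Sb -> wf_prog (unroll qs P Sb k).
Proof.
by move=> Uq HP wf_Sb; elim: k => [|k IH] //=; have := projector_compl HP.
Qed.

Lemma wf_if_branches t (qs : t.-tuple 'I_n) (P : 'M[R[i]]_(dim t)) (S1 S0 : prog R n) :
  wf_prog (PIf qs P S1 S0) ->
  wf_prog (PSeq (assertP qs P) S1) /\ wf_prog (PSeq (assertP qs (pcompl P)) S0).
Proof. by case=> Uq [HP [wf1 wf0]]; have := projector_compl HP. Qed.

Lemma csem_image (S : prog R n) (wf_S : wf_prog S) X : csem S X = semP wf_S @` X.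
Proof.
apply/seteqP; split => r [s Xs Ssr]; exists s => //; last by rewrite -Ssr.
exact: PDO_inj.
Qed.


Lemma csem_mono (S : prog R n) X Y : X `<=` Y -> csem S X `<=` csem S Y.
Proof. by move=> XY r [s Xs Ssr]; exists s => //; exact: XY. Qed.


Lemma csem_seq (S0 S1 : prog R n) X : wf_prog S0 ->
  csem (PSeq S0 S1) X = csem S1 (csem S0 X).
Proof.
move=> wf0; rewrite (csem_image wf0) /csem; apply/seteqP; split => r.
  by case=> s Xs Ssr; exists (semP wf0 s) => //; exists s.
by case=> _ [s Xs <-] Ssr; exists s.
Qed.


Lemma csem_bigcup (S : prog R n) I (A : set I) (F : I -> set (PDO R n)) :
  csem S (\bigcup_(i in A) F i) = \bigcup_(i in A) csem S (F i).
Proof.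
apply/seteqP; split => r; first by case=> s [i Ai Fis] Ssr; exists i => //; exists s.
by case=> i Ai [s Fis Ssr]; exists s => //; exists i.
Qed.


Lemma csem_unroll t (qs : t.-tuple 'I_n) P (Sb : prog R n) k X :
  wf_prog (PSeq (assertP qs P) Sb) ->
  csem (unroll qs P Sb k) X =
  csem (assertP qs (pcompl P)) (iter k (csem (PSeq (assertP qs P) Sb)) X).
Proof. by move=> wf_body; elim: k X => [|k IH] X //=; rewrite csem_seq // IH -iterSr. Qed.


End LiftedSemantics.

Section Join.
Variable L : CLattice.

Lemma le_join2l (a b : L) : cle a (join2 a b).
Proof. by apply: csup_ub; left. Qed.

Lemma le_join2r (a b : L) : cle b (join2 a b).
Proof. by apply: csup_ub; right. Qed.

Lemma join2_least (a b c : L) : cle a c -> cle b c -> cle (join2 a b) c.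
Proof. by move=> ac bc; apply: csup_least => x [->|->]. Qed.

Lemma join2E (a b : L) : join2 a b = csup [set (if i then b else a) | i in [set: bool]].
Proof.
congr csup; apply/seteqP; split => x; first by case=> ->; [exists false | exists true].
by case=> [[]] _ <-; [right | left].
Qed.

End Join.

Section Abstraction.
Variables (R : realType) (n : nat) (L : CLattice).
Variables (alpha : set (PDO R n) -> L) (gamma : L -> set (PDO R n)).
Hypothesis WS : well_structured alpha gamma.
Local Notation C := R[i].

Lemma alpha_mono X Y : X `<=` Y -> cle (alpha X) (alpha Y).
Proof. by case: WS => [[+ _] _]; apply. Qed.

Lemma gamma_mono a b : cle a b -> gamma a `<=` gamma b.
Proof. by case: WS => [[_ [+ _]] _]; apply. Qed.

Lemma galoisP X a : X `<=` gamma a <-> cle (alpha X) a.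
Proof. by case: WS => [[_ [_ [+ _]]] _]; apply. Qed.

Lemma alpha_gammaK a : alpha (gamma a) = a.
Proof. by case: WS => [[_ [_ [_ +]]] _]; apply. Qed.

Lemma alpha_le X a : (forall r, X r -> cle (alpha [set r]) a) -> cle (alpha X) a.
Proof. by move=> Xa; apply/galoisP => r /Xa /galoisP; apply. Qed.

(* Condition (b) of well-structuredness, lifted from states to sets of states. *)
Lemma alpha_image_csup (I : Type) (f : PDO R n -> PDO R n) (g : I -> PDO R n -> PDO R n) X :
  (forall s, alpha [set f s] = csup [set alpha [set g i s] | i in [set: I]]) ->
  alpha (f @` X) = csup [set alpha (g i @` X) | i in [set: I]].
Proof.
move=> fg; apply: cle_anti.
  apply: alpha_le => _ [s Xs <-]; rewrite fg; apply: csup_least => _ [i _ <-].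
  apply: (cle_trans (b := alpha (g i @` X))); first by apply: alpha_mono => _ ->; exists s.
  by apply: csup_ub; exists i.
apply: csup_least => _ [i _ <-]; apply: alpha_le => _ [s Xs <-].
apply: (cle_trans (b := alpha [set f s])); last by apply: alpha_mono => _ ->; exists s.
by rewrite fg; apply: csup_ub; exists i.
Qed.

Lemma scale1C d (M : 'M[C]_d) : ((1 : R)%:C)%C *: M = M.
Proof. by rewrite (_ : ((1 : R)%:C)%C = 1) ?scale1r. Qed.

Lemma alpha_csem_if t (qs : t.-tuple 'I_n) P (S1 S0 : prog R n) X :
  wf_prog (PIf qs P S1 S0) ->
  alpha (csem (PIf qs P S1 S0) X) =
  join2 (alpha (csem (PSeq (assertP qs (pcompl P)) S0) X))
        (alpha (csem (PSeq (assertP qs P) S1) X)).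
Proof.
move=> wf_if; have [wf1 wf0] := wf_if_branches wf_if.
rewrite (csem_image wf_if) (csem_image wf1) (csem_image wf0) join2E.
rewrite (@alpha_image_csup _ _ (fun i : bool => if i then semP wf1 else semP wf0)).
  by congr csup; apply: eq_imagel => -[].
case: WS => _ [alpha_fin _] s; apply: (alpha_fin _ _ (fun=> 1)) => [_ | ]; first exact: ltr01.
by rewrite big_bool /= !scale1C addrC.
Qed.

Lemma alpha_csem_while t (qs : t.-tuple 'I_n) P (Sb : prog R n) X :
  wf_prog (PWhile qs P Sb) ->
  alpha (csem (PWhile qs P Sb) X) =
  csup [set alpha (csem (unroll qs P Sb k) X) | k in [set: nat]].
Proof.
move=> wf_while; have [Uq [HP wf_Sb]] := wf_while.
have wf_k k := wf_unroll k Uq HP wf_Sb.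
rewrite (csem_image wf_while) (@alpha_image_csup _ _ (fun k => semP (wf_k k))).
  by congr csup; apply: eq_imagel => k _; rewrite (csem_image (wf_k k)).
case: WS => _ [_ alpha_cnt] s.
apply: (alpha_cnt (fun k => semP (wf_k k) s) (fun=> 1)) => [_ | ]; first exact: ltr01.
have -> : (fun k => \sum_(i < k) ((1 : R)%:C)%C *: proj1_sig (semP (wf_k i) s)) =
    (fun k => \sum_(i < k) sem (unroll qs P Sb i) (proj1_sig s)).
  by apply: funext => k; apply: eq_bigr => i _; exact: scale1C.
exact: sem_while_mcvg Uq HP (sem_trace_nonincreasing wf_Sb) _ (proj2_sig s).1.
Qed.

Variable abs : basic R n -> L -> L.

Lemma hderiv_sound :
  (forall e, wf_basic e -> sound_abs alpha (csem (PBasic e)) (abs e)) ->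
  forall (S : prog R n) a b, wf_prog S -> hderiv abs a S b -> hvalid gamma a S b.
Proof.
move=> abs_sound S a b wf_S der; elim: der wf_S => {a S b}.
- move=> e a wf_e; apply/galoisP; rewrite -{2}(alpha_gammaK a); exact: abs_sound.
- move=> a a' b S0 S1 _ IH0 _ IH1 [wf0 wf1]; rewrite /hvalid csem_seq //.
  exact: subset_trans (csem_mono (IH0 wf0)) (IH1 wf1).
- move=> a a' b' b S aa' _ IH b'b wf_S; apply: subset_trans (gamma_mono b'b).
  exact: subset_trans (csem_mono (gamma_mono aa')) (IH wf_S).
- move=> a t qs P S1 S0 b1 b0 _ IH1 _ IH0 wf_if; have [wf1 wf0] := wf_if_branches wf_if.
  apply/galoisP; rewrite alpha_csem_if //; apply: join2_least.
    by apply: (cle_trans _ (le_join2l b0 b1)); apply/galoisP; exact: IH0.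
  by apply: (cle_trans _ (le_join2r b0 b1)); apply/galoisP; exact: IH1.
- move=> a b t qs P Sb _ IHbody _ IHexit wf_while; have [Uq [HP wf_Sb]] := wf_while.
  have wf_body : wf_prog (PSeq (assertP qs P) Sb) by [].
  have wf_exit : wf_prog (assertP qs (pcompl P)) by split; last exact: projector_compl.
  apply/galoisP; rewrite alpha_csem_while //; apply: csup_least => _ [k _ <-].
  apply/galoisP; rewrite csem_unroll //; apply: subset_trans (IHexit wf_exit).
  apply: csem_mono; elim: k => //= k IH.
  by apply: subset_trans (IHbody wf_body); exact: csem_mono.
Qed.

Section Completeness.
Hypothesis abs_complete : forall e, wf_basic e -> complete_abs alpha (csem (PBasic e)) (abs e).

Definition alpha_invariant (S : prog R n) :=
  forall X Y, alpha X = alpha Y -> alpha (csem S X) = alpha (csem S Y).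

Lemma alpha_invariant_basic e : wf_basic e -> alpha_invariant (PBasic e).
Proof. by move=> wf_e X Y XY; rewrite !abs_complete // XY. Qed.

Lemma alpha_invariant_seq S0 S1 : wf_prog S0 ->
  alpha_invariant S0 -> alpha_invariant S1 -> alpha_invariant (PSeq S0 S1).
Proof. by move=> wf0 inv0 inv1 X Y XY; rewrite !csem_seq //; exact/inv1/inv0. Qed.

Lemma alpha_invariant_prog S : wf_prog S -> alpha_invariant S.
Proof.
elim: S => [e|S0 IH0 S1 IH1|t qs P S1 IH1 S0 IH0|t qs P Sb IHb].
- exact: alpha_invariant_basic.
- by case=> wf0 wf1; apply: alpha_invariant_seq => //; [exact: IH0 | exact: IH1].
- move=> wf_if; have [[wfP wf1] [wfPc wf0]] := wf_if_branches wf_if.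
  have inv1 : alpha_invariant (PSeq (assertP qs P) S1).
    by apply: alpha_invariant_seq => //; [exact: alpha_invariant_basic | exact: IH1].
  have inv0 : alpha_invariant (PSeq (assertP qs (pcompl P)) S0).
    by apply: alpha_invariant_seq => //; [exact: alpha_invariant_basic | exact: IH0].
  by move=> X Y XY; rewrite !alpha_csem_if // (inv1 _ _ XY) (inv0 _ _ XY).
- move=> wf_while; have [Uq [HP wf_Sb]] := wf_while.
  have wf_exit : wf_basic (BAssert qs (pcompl P)) by split; last exact: projector_compl.
  have wf_body : wf_prog (PSeq (assertP qs P) Sb) by [].
  have inv_body : alpha_invariant (PSeq (assertP qs P) Sb).
    by apply: alpha_invariant_seq => //; [exact: alpha_invariant_basic | exact: IHb].
  have inv_k k : alpha_invariant (unroll qs P Sb k).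
    by elim: k => [|k IH] /=; [exact: alpha_invariant_basic | exact: alpha_invariant_seq].
  move=> X Y XY; rewrite !alpha_csem_while //.
  by congr csup; apply: eq_imagel => k _; exact: inv_k.
Qed.

Definition post (S : prog R n) a := alpha (csem S (gamma a)).

Lemma alpha_csem_post S X : wf_prog S -> alpha (csem S X) = post S (alpha X).
Proof. by move=> wf_S; apply: alpha_invariant_prog; rewrite // alpha_gammaK. Qed.

Lemma hderiv_post_basic e a : wf_basic e -> hderiv abs a (PBasic e) (post (PBasic e) a).
Proof. by move=> wf_e; rewrite /post abs_complete // alpha_gammaK; exact: DExp. Qed.

Lemma hderiv_post_seq S0 S1 : wf_prog S0 -> wf_prog S1 ->
  (forall a, hderiv abs a S0 (post S0 a)) -> (forall a, hderiv abs a S1 (post S1 a)) ->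
  forall a, hderiv abs a (PSeq S0 S1) (post (PSeq S0 S1) a).
Proof.
move=> wf0 wf1 der0 der1 a; rewrite /post csem_seq // alpha_csem_post //.
exact: DSeq (der0 a) (der1 _).
Qed.

Lemma hderiv_post_while t (qs : t.-tuple 'I_n) P Sb : wf_prog (PWhile qs P Sb) ->
  (forall a, hderiv abs a (PSeq (assertP qs P) Sb) (post (PSeq (assertP qs P) Sb) a)) ->
  forall a, hderiv abs a (PWhile qs P Sb) (post (PWhile qs P Sb) a).
Proof.
move=> wf_while der_body a; have [Uq [HP wf_Sb]] := wf_while.
set body := PSeq (assertP qs P) Sb.
have wf_body : wf_prog body by [].
have wf_exit : wf_basic (BAssert qs (pcompl P)) by split; last exact: projector_compl.
set U := \bigcup_(k in [set: nat]) iter k (csem body) (gamma a).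
have aU : cle a (alpha U).
  by rewrite -{1}(alpha_gammaK a); apply: alpha_mono => r ar; exists 0%N.
have invU : hderiv abs (alpha U) body (alpha U).
  apply: DImp (cle_refl _) (der_body _) _; rewrite -alpha_csem_post //.
  by apply: alpha_mono; rewrite csem_bigcup => r [k _ r_k]; exists k.+1.
apply: DImp aU (DWhile invU (DExp _ _ _)) _.
rewrite -abs_complete // /post alpha_csem_while //.
apply/galoisP => r; rewrite csem_bigcup => -[k _]; rewrite -csem_unroll // => r_k.
have /galoisP : cle (alpha (csem (unroll qs P Sb k) (gamma a)))
    (csup [set alpha (csem (unroll qs P Sb k) (gamma a)) | k in [set: nat]]).
  by apply: csup_ub; exists k.
exact.
Qed.

Lemma hderiv_post S a : wf_prog S -> hderiv abs a S (post S a).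
Proof.
elim: S a => [e|S0 IH0 S1 IH1|t qs P S1 IH1 S0 IH0|t qs P Sb IHb] a.
- exact: hderiv_post_basic.
- by case=> wf0 wf1; apply: hderiv_post_seq => // b; [exact: IH0 | exact: IH1].
- move=> wf_if; have [[wfP wf1] [wfPc wf0]] := wf_if_branches wf_if.
  rewrite /post alpha_csem_if //; apply: DMeas.
    by apply: hderiv_post_seq => // b; [exact: hderiv_post_basic | exact: IH1].
  by apply: hderiv_post_seq => // b; [exact: hderiv_post_basic | exact: IH0].
- move=> wf_while; have [Uq [HP wf_Sb]] := wf_while.
  apply: hderiv_post_while => // b.
  by apply: hderiv_post_seq => // c; [exact: hderiv_post_basic | exact: IHb].
Qed.

Lemma hderiv_complete S a b : wf_prog S -> hvalid gamma a S b -> hderiv abs a S b.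
Proof. by move=> wf_S /galoisP valid; exact: DImp (cle_refl a) (hderiv_post a wf_S) valid. Qed.

End Completeness.

End Abstraction.

Theorem mainTheorem9 (R : realType) (n : nat) (L : CLattice)
  (alpha : set (PDO R n) -> L) (gamma : L -> set (PDO R n))
  (abs : basic R n -> L -> L) :
  well_structured alpha gamma ->
  (forall e, wf_basic e -> forall a b, cle a b -> cle (abs e a) (abs e b)) ->
  ((forall e, wf_basic e -> sound_abs alpha (csem (PBasic e)) (abs e)) ->
     forall (S : prog R n) (a b : L), wf_prog S -> hderiv abs a S b -> hvalid gamma a S b) /\
  ((forall e, wf_basic e -> complete_abs alpha (csem (PBasic e)) (abs e)) ->
     forall (S : prog R n) (a b : L), wf_prog S -> (hderiv abs a S b <-> hvalid gamma a S b)).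
Proof.
move=> WS _; split; first exact: hderiv_sound.
move=> abs_complete S a b wf_S; split; last exact: (hderiv_complete WS abs_complete).
apply: (hderiv_sound WS) => // e wf_e X; rewrite abs_complete //; exact: cle_refl.
Qed.
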